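(* For every non-trivial height 1 condition $\Sigma$ there exists a finite graph $\mathbb{G}$ that is not 3-colorable such that $\Sigma$ implies $\Sigma_{\mathbb{G}}$.
   Context: A graph is a structure $(V,E)$ with a single symmetric binary relation $E$ (loops allowed); it is 3-colorable if it admits a homomorphism to the complete loopless graph on three vertices. A clone on a set $A$ is a set of finitary operations on $A$ containing all projections and closed under composition. A height 1 condition is a finite set of identities $f(x_{\pi(1)},\dots,x_{\pi(n)})\approx g(x_{\rho(1)},\dots,x_{\rho(m)})$ (function symbols, arbitrary maps $\pi,\rho$, universally quantified); a clone satisfies it if its symbols can be assigned functions of the clone of the right arities making all identities true. $\Sigma$ implies $\Sigma'$ if every clone satisfying $\Sigma$ satisfies $\Sigma'$; $\Sigma$ is trivial if it is satisfied in every clone (equivalently, in the clone of projections on $\{0,1\}$). For a finite graph $\mathbb{G}=(V,E)$, $\Sigma_{\mathbb{G}}$ is the height 1 condition with a ternary symbol $f_v$ for each $v\in V$, a $6$-ary symbol $g_{(u,v)}$ for each $(u,v)\in E$, and, for each $(u,v)\in E$, the identities $f_u(x,y,z)\approx g_{(u,v)}(x,y,x,z,y,z)$ and $f_v(x,y,z)\approx g_{(u,v)}(y,x,z,x,z,y)$. *)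

From Stdlib Require List.
From mathcomp Require Import all_boot.
Set Implicit Arguments. Unset Strict Implicit. Unset Printing Implicit Defensive.

Definition op (A : Type) (n : nat) := ('I_n -> A) -> A.

Definition is_clone (A : Type) (C : forall n, op A n -> Prop) : Prop :=
  (forall n (i : 'I_n), C n (fun x => x i)) /\
  (forall n m (f : op A n) (g : 'I_n -> op A m),
      C n f -> (forall i, C m (g i)) -> C m (fun x => f (fun i => g i x))).

(** A height 1 identity  f(x_{pi(1)},...,x_{pi(n)}) ~ g(x_{rho(1)},...,x_{rho(m)})
    over the variables x_0,...,x_{nv-1}. *)
Record h1id (S : Type) (ar : S -> nat) := H1Id {
  lhs : S;
  rhs : S;
  nv : nat;
  pi : 'I_(ar lhs) -> 'I_nv;
  rho : 'I_(ar rhs) -> 'I_nv }.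

Record h1cond := H1Cond {
  h1sym : finType;
  h1ar : h1sym -> nat;
  h1ids : seq (h1id h1ar) }.

Definition satisfies (A : Type) (C : forall n, op A n -> Prop) (Sg : h1cond) : Prop :=
  exists F : forall s : h1sym Sg, op A (h1ar s),
    (forall s, C (h1ar s) (F s)) /\
    (forall e, List.In e (h1ids Sg) ->
       forall x : 'I_(nv e) -> A,
         F (lhs e) (fun i => x (@pi _ _ e i)) = F (rhs e) (fun j => x (@rho _ _ e j))).

Definition h1implies (Sg Sg' : h1cond) : Prop :=
  forall (A : Type) (C : forall n, op A n -> Prop),
    is_clone C -> satisfies C Sg -> satisfies C Sg'.

Definition h1trivial (Sg : h1cond) : Prop :=
  forall (A : Type) (C : forall n, op A n -> Prop), is_clone C -> satisfies C Sg.

(** Finite graphs: a finite vertex type with a symmetric edge relation (loops allowed). *)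
Definition three_colorable (V : finType) (E : rel V) : Prop :=
  exists c : V -> 'I_3, forall u v, E u v -> c u != c v.

Section SigmaG.
Variables (V : finType) (E : rel V).

Definition edgeT := {p : V * V | E p.1 p.2}.

Definition sgG_ar (s : V + edgeT) : nat := if s is inl _ then 3 else 6.

Definition idx3 (l : seq nat) (j : 'I_6) : 'I_3 := inord (nth 0 l j).

Definition sgG_ids_of (e : edgeT) : seq (h1id sgG_ar) :=
  [:: @H1Id _ sgG_ar (inl (val e).1) (inr e) 3 (fun i => i) (idx3 [:: 0; 1; 0; 2; 1; 2]);
      @H1Id _ sgG_ar (inl (val e).2) (inr e) 3 (fun i => i) (idx3 [:: 1; 0; 2; 0; 2; 1])].

Definition SigmaG : h1cond :=
  @H1Cond (V + edgeT)%type sgG_ar (flatten [seq sgG_ids_of e | e <- enum {: edgeT}]).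
End SigmaG.

From Pilot Require Import Defs.
From mathcomp Require Import all_boot.
From Stdlib Require Import FunctionalExtensionality ClassicalEpsilon.
Set Implicit Arguments. Unset Strict Implicit. Unset Printing Implicit Defensive.

(** The graph G is the "free" graph of Sigma at arity 3: its
    vertices are the terms  f_s(x_{a(1)},...,x_{a(n)})  with s a symbol of
    Sigma and a a map into the three variables x, y, z; u and v are adjacent
    when Sigma forces a 6-ary term g with  u(x,y,z) = g(x,y,x,z,y,z)  and
    v(x,y,z) = g(y,x,z,x,z,y).

    It then builds G
    and shows (1) Sigma implies Sigma_G, interpreting each vertex by the term
    it denotes and each edge by a witnessing 6-ary term; (2) a 3-coloring of G
    restricted to the vertices of a symbol s is a polymorphism of K3, hence
    depends on one coordinate k(s), and it forces every identity of Sigma to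
    be compatible with these coordinates, so the projections x |-> x(k(s))
    satisfy Sigma and Sigma is trivial. *)

Definition o0 : 'I_3 := @Ordinal 3 0 isT.
Definition o1 : 'I_3 := @Ordinal 3 1 isT.
Definition o2 : 'I_3 := @Ordinal 3 2 isT.

Definition all3 (P : pred 'I_3) : bool := all P [:: o0; o1; o2].

Lemma all3P (P : pred 'I_3) : reflect (forall t, P t) (all3 P).
Proof.
apply: (iffP allP) => [HP t|HP t _]; last exact: HP.
by apply: HP; case: t => [[|[|[|?]]] ?].
Qed.

Definition third (a b : 'I_3) : 'I_3 :=
  if (a != o0) && (b != o0) then o0
  else if (a != o1) && (b != o1) then o1 else o2.

Lemma third_neq (a b : 'I_3) : (third a b != a) && (third a b != b).
Proof. by case: a b => [[|[|[|?]]] ?] [[|[|[|?]]] ?]. Qed.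

Lemma I3_pigeonhole (x y z w : 'I_3) :
  x != y -> x != z -> y != z -> w != y -> w != z -> w = x.
Proof.
by case: x y z w => [[|[|[|?]]] ?] [[|[|[|?]]] ?] [[|[|[|?]]] ?] [[|[|[|?]]] ?]
  //= *; apply: val_inj.
Qed.

Definition crossed (r r' : 'I_3 -> 'I_3) : bool :=
  all3 (fun t => all3 (fun t' => (t != t') ==> (r t != r' t'))).
Definition constant_row (r : 'I_3 -> 'I_3) : bool := all3 (fun t => r t == r o0).
Definition same_row (r r' : 'I_3 -> 'I_3) : bool := all3 (fun t => r t == r' t).

Lemma constant_rowP (r : 'I_3 -> 'I_3) :
  reflect (forall t, r t = r o0) (constant_row r).
Proof. by apply: (iffP (all3P _)) => H t; apply/eqP. Qed.

Lemma same_rowP (r r' : 'I_3 -> 'I_3) : reflect (r = r') (same_row r r').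
Proof.
apply: (iffP (all3P _)) => [H|-> t //].
by apply: functional_extensionality => t; apply/eqP.
Qed.

Definition row3 (a b c : 'I_3) (t : 'I_3) : 'I_3 :=
  match val t with 0 => a | 1 => b | _ => c end.

Definition all_rows (P : pred ('I_3 -> 'I_3)) : bool :=
  all3 (fun a => all3 (fun b => all3 (fun c => P (row3 a b c)))).

Lemma all_rowsP (P : pred ('I_3 -> 'I_3)) : all_rows P -> forall r, P r.
Proof.
move=> HP r; have -> : r = row3 (r o0) (r o1) (r o2).
  apply: functional_extensionality => -[[|[|[|?]]] Ht] //;
  by rewrite /row3 /=; congr r; apply: val_inj.
by move: HP => /all3P/(_ (r o0))/all3P/(_ (r o1))/all3P/(_ (r o2)).
Qed.

Lemma three_crossed_rows_check :
  all_rows (fun r0 => all_rows (fun r1 => crossed r0 r1 ==> all_rows (fun r2 =>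
    crossed r0 r2 && crossed r1 r2 ==>
    (constant_row r0 && constant_row r1) || same_row r0 r1))).
Proof. by vm_compute. Qed.

Lemma three_crossed_rows (r0 r1 r2 : 'I_3 -> 'I_3) :
  crossed r0 r1 -> crossed r0 r2 -> crossed r1 r2 ->
  (constant_row r0 && constant_row r1) || same_row r0 r1.
Proof.
move=> c01 c02 c12.
move/all_rowsP/(_ r0)/all_rowsP/(_ r1): three_crossed_rows_check.
by rewrite c01 => /all_rowsP/(_ r2); rewrite c02 c12.
Qed.

(** * Polymorphisms of K3 are essentially unary *)

(** a and b differ at every coordinate, i.e. they are adjacent in K3^n. *)
Definition perp n (a b : 'I_n -> 'I_3) : Prop := forall i, a i != b i.

Definition K3_polymorphism n (h : ('I_n -> 'I_3) -> 'I_3) : Prop :=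
  forall a b, perp a b -> h a != h b.

Definition depends_only_on n (h : ('I_n -> 'I_3) -> 'I_3) (k : 'I_n) : Prop :=
  forall a b, a k = b k -> h a = h b.

Lemma depends_only_on_inj n (h : ('I_n -> 'I_3) -> 'I_3) k :
  K3_polymorphism h -> depends_only_on h k ->
  forall a b, a k != b k -> h a != h b.
Proof.
move=> hpol hk a b abk.
rewrite (hk a (fun _ => a k)) // (hk b (fun _ => b k)) //.
exact: hpol.
Qed.

Definition ext n (x : 'I_n -> 'I_3) (t : 'I_3) : 'I_n.+1 -> 'I_3 :=
  fun i => if unlift ord_max i is Some j then x j else t.

Lemma ext_eta n (a : 'I_n.+1 -> 'I_3) :
  a = ext (fun j => a (lift ord_max j)) (a ord_max).
Proof.
by apply: functional_extensionality => i; rewrite /ext; case: unliftP => [j ->|->].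
Qed.

Lemma perp_ext n (x y : 'I_n -> 'I_3) t t' :
  perp x y -> t != t' -> perp (ext x t) (ext y t').
Proof. by move=> xy tt' i; rewrite /ext; case: (unlift ord_max i). Qed.

Section Rows.
Variables (n : nat) (h : ('I_n.+1 -> 'I_3) -> 'I_3).
Hypothesis h_pol : K3_polymorphism h.

Definition row (x : 'I_n -> 'I_3) : 'I_3 -> 'I_3 := fun t => h (ext x t).

Lemma h_row a : h a = row (fun j => a (lift ord_max j)) (a ord_max).
Proof. by rewrite {1}[a]ext_eta. Qed.

Lemma crossed_rows x y : perp x y -> crossed (row x) (row y).
Proof.
move=> xy; apply/all3P => t; apply/all3P => t'; apply/implyP => tt'.
exact/h_pol/perp_ext.
Qed.

(** Rows of perpendicular vectors are both constant or equal, as witnessed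
    by a third vector perpendicular to both. *)
Lemma rows_of_perp x z : perp x z ->
  (constant_row (row x) && constant_row (row z)) || same_row (row x) (row z).
Proof.
move=> xz; pose w i := third (x i) (z i).
have xw : perp x w by move=> i; case/andP: (third_neq (x i) (z i)); rewrite eq_sym.
have zw : perp z w by move=> i; case/andP: (third_neq (x i) (z i)) => _; rewrite eq_sym.
by apply: (three_crossed_rows (r2 := row w)); apply: crossed_rows.
Qed.

Lemma rows_dichotomy :
  (forall y, constant_row (row y)) \/ (forall y, row y = row (fun _ => o0)).
Proof.
(* Every y is linked to the constant vector x0 through a vector m
   perpendicular to both, along which constancy resp. equality propagates. *)
pose x0 (i : 'I_n) := o0.
have mid y : perp x0 (fun i => third (x0 i) (y i)) /\
             perp (fun i => third (x0 i) (y i)) y.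
  by split=> i; case/andP: (third_neq (x0 i) (y i)); rewrite // eq_sym.
have [cx0|ncx0] := boolP (constant_row (row x0)).
  have constant_perp x z : perp x z -> constant_row (row x) -> constant_row (row z).
    by move=> xz cx; case/orP: (rows_of_perp xz) => [/andP[]|/same_rowP <-].
  left=> y; have [x0m my] := mid y.
  exact: (constant_perp _ _ my (constant_perp _ _ x0m cx0)).
have same_perp x z : perp x z -> ~~ constant_row (row x) -> row z = row x.
  move=> xz ncx; case/orP: (rows_of_perp xz) => [/andP[cx _]|/same_rowP //].
  by rewrite cx in ncx.
right=> y; have [x0m my] := mid y.
have row_m := same_perp _ _ x0m ncx0.
by rewrite (same_perp _ _ my) row_m.
Qed.

End Rows.

Lemma K3_polymorphism_unary n (h : ('I_n -> 'I_3) -> 'I_3) :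
  K3_polymorphism h -> exists k, depends_only_on h k.
Proof.
elim: n h => [|n IHn] h hpol.
  (* In arity 0 the empty tuple is perpendicular to itself. *)
  have perp0 : perp (fun _ : 'I_0 => o0) (fun _ => o0) by case.
  by have /eqP := hpol _ _ perp0.
have [rc|req] := rows_dichotomy hpol.
  (* Constant rows: h ignores its last argument and restricts to a
     polymorphism of arity n. *)
  pose g x := h (ext x o0).
  have [k gk] : exists k, depends_only_on g k.
    apply: IHn => x y xy.
    by rewrite /g -[h (ext y o0)]/(row h y o0) -(constant_rowP _ (rc y) o1); apply/hpol/perp_ext.
  exists (lift ord_max k) => a b ab.
  rewrite (h_row h a) (h_row h b) (constant_rowP _ (rc _)) (constant_rowP _ (rc (fun j => b _))).
  exact: gk.
(* Equal rows: h only depends on its last argument. *)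
by exists ord_max => a b ab; rewrite (h_row h a) (h_row h b) !req ab.
Qed.

Lemma clone_minor (A : Type) (C : forall n, op A n -> Prop) n m (f : op A n)
    (r : 'I_n -> 'I_m) :
  is_clone C -> C n f -> C m (fun x => f (fun i => x (r i))).
Proof. by case=> proj comp fC; apply: comp fC _ => i; apply: proj. Qed.

Lemma h1trivial_projections (Sg : h1cond) (k : forall s : h1sym Sg, 'I_(h1ar s)) :
  (forall e, List.In e (h1ids Sg) -> Defs.pi (k (lhs e)) = rho (k (rhs e))) ->
  h1trivial Sg.
Proof.
move=> kP A C [proj _]; exists (fun s x => x (k s)); split=> [s|e He x].
  exact: proj.
by rewrite /= kP.
Qed.

Lemma In_cat (U : Type) (s1 s2 : seq U) (y : U) :
  List.In y (s1 ++ s2) -> List.In y s1 \/ List.In y s2.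
Proof.
elim: s1 => [|z s1 IHs1] /=; first by right.
by case=> [->|/IHs1 [H|H]]; [left; left | left; right | right].
Qed.

Lemma In_flatten_map (T U : Type) (f : T -> seq U) (l : seq T) (y : U) :
  List.In y (flatten [seq f x | x <- l]) -> exists x, List.In y (f x).
Proof.
elim: l => [|x l IHl] //= /(@In_cat _ (f x)) [Hx|/IHl //].
by exists x.
Qed.

Definition decide (P : Prop) : bool :=
  if excluded_middle_informative P then true else false.

Lemma decideP (P : Prop) : reflect P (decide P).
Proof. by rewrite /decide; case: excluded_middle_informative => H; constructor. Qed.

(** g(x,y,x,z,y,z) and g(y,x,z,x,z,y). *)
Definition p1 : 'I_6 -> 'I_3 := idx3 [:: 0; 1; 0; 2; 1; 2].
Definition p2 : 'I_6 -> 'I_3 := idx3 [:: 1; 0; 2; 0; 2; 1].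

(** Swapping the first two variables exchanges the two minors. *)
Definition swap6 (j : 'I_6) : 'I_6 := inord (nth 0 [:: 1; 0; 3; 2; 5; 4] j).

Lemma p1_swap6 j : p1 (swap6 j) = p2 j.
Proof.
by case: j => [[|[|[|[|[|[|?]]]]]] ?] //; apply: val_inj; rewrite /p1 /p2 /swap6 /idx3 /= ?inordK.
Qed.

Lemma p2_swap6 j : p2 (swap6 j) = p1 j.
Proof.
by case: j => [[|[|[|[|[|[|?]]]]]] ?] //; apply: val_inj; rewrite /p1 /p2 /swap6 /idx3 /= ?inordK.
Qed.

Lemma p12_onto (t t' : 'I_3) : t != t' -> exists j, p1 j = t /\ p2 j = t'.
Proof.
case: t t' => [[|[|[|?]]] ?] [[|[|[|?]]] ?] //= _;
  [exists (inord 0) | exists (inord 2) | exists (inord 1)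
  | exists (inord 4) | exists (inord 3) | exists (inord 5)];
  by split; apply: val_inj; rewrite /p1 /p2 /idx3 /= !inordK.
Qed.

(** * The free graph of a height 1 condition *)

Section FreeGraph.
Variable Sg : h1cond.

Definition models (A : Type) (F : forall s : h1sym Sg, op A (h1ar s)) : Prop :=
  forall e, List.In e (h1ids Sg) -> forall x : 'I_(nv e) -> A,
    F (lhs e) (fun i => x (Defs.pi i)) = F (rhs e) (fun j => x (rho j)).

(** Vertices: a symbol s applied to variables among x, y, z. *)
Definition vertex : finType := {s : h1sym Sg & {ffun 'I_(h1ar s) -> 'I_3}}.

Definition vtx s (a : 'I_(h1ar s) -> 'I_3) : vertex := existT _ s [ffun i => a i].

Lemma vtx_ext s (a b : 'I_(h1ar s) -> 'I_3) : a =1 b -> vtx a = vtx b.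
Proof. by move=> ab; congr existT; apply/ffunP => i; rewrite !ffunE. Qed.

Definition eval (A : Type) (F : forall s : h1sym Sg, op A (h1ar s)) (u : vertex) : op A 3 :=
  fun x => F (tag u) (fun i => x (tagged u i)).

Lemma eval_vtx A F s (a : 'I_(h1ar s) -> 'I_3) (x : 'I_3 -> A) :
  eval F (vtx a) x = F s (fun i => x (a i)).
Proof. by congr (F s); apply: functional_extensionality => i; rewrite ffunE. Qed.

Definition sg_equiv (u v : vertex) : Prop :=
  forall A (F : forall s : h1sym Sg, op A (h1ar s)), models F ->
    forall x, eval F u x = eval F v x.

Lemma identity_equiv e (a : 'I_(nv e) -> 'I_3) : List.In e (h1ids Sg) ->
  sg_equiv (vtx (fun i => a (Defs.pi i))) (vtx (fun j => a (rho j))).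
Proof. by move=> He A F FM x; rewrite !eval_vtx (FM e He (fun m => x (a m))). Qed.

(** u and v are the two minors  g(x,y,x,z,y,z), g(y,x,z,x,z,y)  of a 6-ary
    term g = s(w_{tau(1)},...), up to Sigma-equivalence. *)
Definition linked (u v : vertex) : Prop :=
  exists s (tau : 'I_(h1ar s) -> 'I_6),
    sg_equiv u (vtx (fun i => p1 (tau i))) /\ sg_equiv v (vtx (fun i => p2 (tau i))).

Definition free_edge : rel vertex := fun u v => decide (linked u v).

Lemma linked_sym u v : linked u v -> linked v u.
Proof.
case=> s [tau [Hu Hv]]; exists s, (fun i => swap6 (tau i)); split.
- by rewrite (vtx_ext (b := fun i => p2 (tau i))) // => i; rewrite p1_swap6.
- by rewrite (vtx_ext (b := fun i => p1 (tau i))) // => i; rewrite p2_swap6.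
Qed.

Lemma free_edge_sym : symmetric free_edge.
Proof. by move=> u v; apply/decideP/decideP; apply: linked_sym. Qed.

Lemma linked_equiv u v w : sg_equiv v w -> linked u v -> linked u w.
Proof.
move=> vw [s [tau [Hu Hv]]]; exists s, tau; split=> // A F FM x.
by rewrite -(vw A F FM x); apply: Hv.
Qed.

Lemma linked_perp s (a b : 'I_(h1ar s) -> 'I_3) : perp a b -> linked (vtx a) (vtx b).
Proof.
move=> ab; have [tau tauP] := fin_all_exists (fun i => p12_onto (ab i)).
exists s, tau; split=> A F FM x; congr (eval F _ x); apply: vtx_ext => i;
  by case: (tauP i).
Qed.

(** Sigma implies Sigma_G: vertices and edges are interpreted by the terms
    they denote. *)
Lemma implies_SigmaG : h1implies Sg (SigmaG free_edge).
Proof.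
move=> A C clC [F [FC FM]].
have evalC u : C 3 (eval F u) by exact: (clone_minor (fun i => tagged u i) clC (FC _)).
have /fin_all_exists [g gP] : forall e : edgeT free_edge, exists g : op A 6,
    [/\ C 6 g, forall x, eval F (val e).1 x = g (fun j => x (p1 j))
             & forall x, eval F (val e).2 x = g (fun j => x (p2 j))].
  case=> -[u v] /decideP [s [tau [Hu Hv]]] /=.
  exists (fun w => F s (fun i => w (tau i))); split; first exact: clone_minor clC (FC s).
    by move=> x; rewrite (Hu A F FM x) eval_vtx.
  by move=> x; rewrite (Hv A F FM x) eval_vtx.
exists (fun s => match s return op A (sgG_ar s) with inl u => eval F u | inr e => g e end).
split=> [[u|e] /=|e0]; [exact: evalC | by case: (gP e) |].
move=> /(In_flatten_map (f := @sgG_ids_of _ free_edge)) [e].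
by case: (gP e) => _ g1 g2 [<-|[<-|[]]] x /=.
Qed.

Section Coloring.
Variable c : vertex -> 'I_3.
Hypothesis c_proper : forall u v, free_edge u v -> c u != c v.

Lemma color_polymorphism s : K3_polymorphism (fun a : 'I_(h1ar s) -> 'I_3 => c (vtx a)).
Proof. by move=> a b ab; apply/c_proper/decideP/linked_perp. Qed.

(** Both sides of an identity of Sigma get the same color: the left side u has
    two neighbours colored with the two other colors, and these are also
    neighbours of the equivalent right side. *)
Lemma color_identity e (a : 'I_(nv e) -> 'I_3) : List.In e (h1ids Sg) ->
  c (vtx (fun j => a (rho j))) = c (vtx (fun i => a (Defs.pi i))).
Proof.
move=> He; pose b1 m := third (a m) (a m); pose b2 m := third (a m) (b1 m).
pose vl (b : 'I_(nv e) -> 'I_3) := vtx (fun i => b (Defs.pi i)).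
have ab1 m : a m != b1 m by case/andP: (third_neq (a m) (a m)); rewrite eq_sym.
have ab2 m : a m != b2 m by case/andP: (third_neq (a m) (b1 m)); rewrite eq_sym.
have b12 m : b1 m != b2 m by case/andP: (third_neq (a m) (b1 m)) => _; rewrite eq_sym.
have right_side b : perp b a -> c (vl b) != c (vtx (fun j => a (rho j))).
  move=> ba; apply/c_proper/decideP/(linked_equiv (identity_equiv a He)).
  exact: linked_perp.
apply: (I3_pigeonhole (y := c (vl b1)) (z := c (vl b2))).
- by apply: color_polymorphism => i; apply: ab1.
- by apply: color_polymorphism => i; apply: ab2.
- by apply: color_polymorphism => i; apply: b12.
- by rewrite eq_sym; apply: right_side => i; rewrite eq_sym.
- by rewrite eq_sym; apply: right_side => i; rewrite eq_sym.
Qed.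

Lemma color_coordinates e (kl : 'I_(h1ar (lhs e))) (kr : 'I_(h1ar (rhs e))) :
  List.In e (h1ids Sg) ->
  depends_only_on (fun a => c (vtx a)) kl -> depends_only_on (fun a => c (vtx a)) kr ->
  Defs.pi kl = rho kr.
Proof.
move=> He hl hr; apply/eqP/negPn/negP => ne.
pose a m := if m == Defs.pi kl then o1 else o0.
pose zero (m : 'I_(nv e)) := o0.
have lhs_differ : c (vtx (fun i => a (Defs.pi i))) != c (vtx (fun i => zero (Defs.pi i))).
  by apply: (depends_only_on_inj (@color_polymorphism (lhs e)) hl); rewrite /a eqxx.
have rhs_agree : c (vtx (fun j => a (rho j))) = c (vtx (fun j => zero (rho j))).
  by apply: hr; rewrite /a /zero eq_sym (negbTE ne).
by rewrite -!color_identity // rhs_agree eqxx in lhs_differ.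
Qed.

End Coloring.

Lemma free_graph_not_3colorable : ~ h1trivial Sg -> ~ three_colorable free_edge.
Proof.
move=> nontrivial [c c_proper]; apply: nontrivial.
have /fin_all_exists [k kP] :
    forall s, exists k : 'I_(h1ar s), depends_only_on (fun a => c (vtx a)) k.
  by move=> s; apply/K3_polymorphism_unary/(color_polymorphism c_proper).
apply: (h1trivial_projections (k := k)) => e He.
exact: (color_coordinates c_proper He).
Qed.

End FreeGraph.

Theorem corollary3p6 :
  forall Sg : h1cond, ~ h1trivial Sg ->
  exists (V : finType) (E : rel V),
    symmetric E /\ ~ three_colorable E /\ h1implies Sg (SigmaG E).
Proof.
move=> Sg nontrivial; exists (vertex Sg), (free_edge (Sg := Sg)).
split; first exact: free_edge_sym.
by split; [exact: free_graph_not_3colorable | exact: implies_SigmaG].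
Qed.
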